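(* The class of threshold graphs is degree sandwich monotone; that is, for every threshold graph $G$ and every set $F\subseteq E(G)$ such that $G-F$ is threshold, every degree-minimal edge $e$ in $F$ satisfies that $G-e$ is threshold.
   Context: A graph $G=(V,E)$ is threshold if there exist a labeling $\ell:V\to\mathbb{N}_0$ and $t\in\mathbb{N}_0$ such that $X\subseteq V$ is independent iff $\sum_{x\in X}\ell(x)\le t$. Given a graph $G$ and $F\subseteq E(G)$, an edge $e\in F$ is degree-minimal in $F$ if its endpoints can be named $u,v$ so that (i) $u$ has the smallest degree in $G$ among all vertices incident to an edge of $F$, and (ii) $v$ has the smallest degree in $G$ among all vertices $w$ with $uw\in F$. *)

(* A finite simple graph on vertex type T is given by its
   edge set E : {set {set T}}, every edge being a 2-element subset of T. *)
From mathcomp Require Import all_boot.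
Set Implicit Arguments. Unset Strict Implicit. Unset Printing Implicit Defensive.

Section Graphs.
Variable T : finType.

Definition simple_graph (E : {set {set T}}) : bool :=
  [forall e in E, #|e| == 2].

Definition deg (E : {set {set T}}) (x : T) : nat :=
  #|[set e in E | x \in e]|.

Definition independent (E : {set {set T}}) (X : {set T}) : bool :=
  [forall e in E, ~~ (e \subset X)].

Definition threshold (E : {set {set T}}) : Prop :=
  exists (l : T -> nat) (t : nat),
    forall X : {set T}, independent E X = (\sum_(x in X) l x <= t).

Definition degree_minimal (E F : {set {set T}}) (e : {set T}) : Prop :=
  e \in F /\
  exists u v : T,
    [/\ e = [set u; v],
        (forall w : T, (exists2 f, f \in F & w \in f) -> deg E u <= deg E w)
      & (forall w : T, [set u; w] \in F -> deg E v <= deg E w)].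
End Graphs.

From mathcomp Require Import all_boot zify.
Set Implicit Arguments.
Unset Strict Implicit.
Unset Printing Implicit Defensive.

(* Threshold graphs are exactly the simple graphs with no alternating 4-cycle
   a-b-d-c-a (edges ab, cd, non-edges ac, bd; i.e. no induced 2K2, P4 or C4):
   threshold labels would give l a + l b, l c + l d > t >= l a + l c, l b + l d,
   and conversely a graph without such a cycle has an isolated or a dominating
   vertex, which can be peeled off to build the labels inductively.  In such a
   graph an edge xz with yz a non-edge forces deg y < deg x.
   Deleting uv can only create an alternating 4-cycle having uv as a non-edge,
   that is, edges ub and vd with bd a non-edge.  If ub is in F, minimality of v
   gives deg v <= deg b, whereas vd and the non-edge bd give deg b < deg v; if
   vd is in F the same happens with u and d; and if neither is in F, then
   u-b-d-v-u is an alternating 4-cycle of G - F. *)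

Section AlternatingCycles.
Variable T : finType.
Implicit Types (E : {set {set T}}) (S X : {set T}).

Definition alt4_free E := forall a b c d : T, a != c -> b != d ->
  [set a; b] \in E -> [set c; d] \in E -> [set a; c] \notin E ->
  [set b; d] \notin E -> False.

Definition nbhd E S w := [set w' in S | [set w; w'] \in E].

Definition threshold_on E S := exists (l : T -> nat) (t : nat),
  forall X, X \subset S -> independent E X = (\sum_(x in X) l x <= t).

Lemma simple_graph_sub E E' : simple_graph E -> E' \subset E -> simple_graph E'.
Proof.
move=> /forall_inP simpleE /subsetP sub; apply/forall_inP => e /sub.
exact: simpleE.
Qed.

Lemma big_setD1_if (f : T -> nat) x X :
  \sum_(y in X) f y = (if x \in X then f x else 0) + \sum_(y in X :\ x) f y.
Proof.
case: ifP => xX; first by rewrite (big_setD1 x).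
rewrite add0n; apply: eq_bigl => y; rewrite !inE.
by case: (eqVneq y x) => [->|].
Qed.

Lemma scaled_leq n s t m : m <= n ->
  (n.+1 * s + m <= n.+1 * t + n) = (s <= t).
Proof. by move=> mn; case: (leqP s t) => st; apply/idP => /=; nia. Qed.

Lemma alt4_free_setD1 E u v :
  alt4_free E ->
  (forall b d, b != d -> [set u; b] \in E :\ [set u; v] ->
     [set v; d] \in E :\ [set u; v] -> [set b; d] \notin E :\ [set u; v] ->
     False) ->
  alt4_free (E :\ [set u; v]).
Proof.
move=> alt4E across.
have across_uv a b c d : a != c -> b != d -> [set a; c] = [set u; v] ->
    [set a; b] \in E :\ [set u; v] -> [set c; d] \in E :\ [set u; v] ->
    [set b; d] \notin E :\ [set u; v] -> False.
  move=> + bd acuv; have: a \in [set u; v] by rewrite -acuv set21.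
  have: c \in [set u; v] by rewrite -acuv set22.
  move=> /set2P[]-> /set2P[]->; rewrite ?eqxx // => _ ub vd bdE.
    by apply: (across d b _ vd ub); [rewrite eq_sym | rewrite setUC].
  exact: (across b d).
move=> a b c d ac bd abE cdE acE bdE.
case: (eqVneq [set a; c] [set u; v]) => [acuv | ac_uv].
  exact: (across_uv a b c d).
case: (eqVneq [set b; d] [set u; v]) => [bduv | bd_uv].
  by apply: (across_uv b a d c) => //; rewrite setUC.
move: abE cdE acE bdE; rewrite !inE (negbTE ac_uv) (negbTE bd_uv) /=.
by move=> /andP[_ abE] /andP[_ cdE]; apply: alt4E abE cdE.
Qed.

Section SimpleGraph.
Variable E : {set {set T}}.
Hypothesis simpleE : simple_graph E.

Lemma card_edge e : e \in E -> #|e| = 2.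
Proof. by move/forall_inP: simpleE => /[apply]/eqP. Qed.

Lemma edgeP e : e \in E -> exists a b, a != b /\ e = [set a; b].
Proof. by move/card_edge/eqP/cards2P. Qed.

Lemma edge_neq a b : [set a; b] \in E -> a != b.
Proof. by move/card_edge; rewrite cards2; case: (a != b). Qed.

Lemma loop_notin a : [set a; a] \notin E.
Proof. by apply/negP => /edge_neq; rewrite eqxx. Qed.

Lemma independentP X :
  reflect (forall a b, a \in X -> b \in X -> [set a; b] \notin E)
          (independent E X).
Proof.
apply: (iffP forall_inP) => [indep a b aX bX | noedge e].
  apply/negP => /indep/negP; apply; apply/subsetP => w.
  by rewrite !inE => /orP[]/eqP->.
move=> eE; have [a [b [_ eab]]] := edgeP eE; rewrite eab in eE *.
apply/negP => /subsetP abX.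
by have := noedge a b (abX a (set21 a b)) (abX b (set22 a b)); rewrite eE.
Qed.

Lemma independent2 a c : independent E [set a; c] = ([set a; c] \notin E).
Proof.
apply/independentP/idP => [/(_ a c) | acE p q].
  by apply; rewrite !inE eqxx ?orbT.
by rewrite !inE => /orP[]/eqP-> /orP[]/eqP->; rewrite ?loop_notin // setUC.
Qed.

Lemma threshold_alt4_free : threshold E -> alt4_free E.
Proof.
move=> [l [t thr]] a b c d ac bd abE cdE acE bdE.
have sum2 p q : p != q -> \sum_(x in [set p; q]) l x = l p + l q.
  by move=> pq; rewrite big_setU1 ?inE // big_set1.
move: (thr [set a; b]) (thr [set c; d]) (thr [set a; c]) (thr [set b; d]).
have [ab cd] := (edge_neq abE, edge_neq cdE).
rewrite !independent2 abE cdE acE bdE !sum2 //.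
by move=> /esym/negbT + /esym/negbT + /esym + /esym; lia.
Qed.

Lemma deg_nbhd w : deg E w = #|nbhd E setT w|.
Proof.
rewrite /deg.
have -> : [set e in E | w \in e] = [set [set w; w'] | w' in nbhd E setT w].
  apply/setP => e; rewrite !inE.
  apply/andP/imsetP => [[eE] | [w' /[!inE] wE ->]].
    case/edgeP: (eE) => p [q [_ epq]]; rewrite epq !inE => /orP[]/eqP wpq.
      by exists q; rewrite ?inE wpq -?epq.
    by exists p; rewrite ?inE wpq setUC -?epq.
  by rewrite set21.
rewrite card_in_imset // => p q; rewrite !inE => /edge_neq wp _ /setP/(_ p).
by rewrite !inE eqxx orbT eq_sym (negbTE wp) => /esym/eqP.
Qed.

Section AlternatingCycleFree.
Hypothesis alt4E : alt4_free E.

Lemma card_nbhd_lt S x y z : x \in S -> y \in S -> z \in S ->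
  [set x; z] \in E -> [set y; z] \notin E -> z != y -> x != y ->
  #|nbhd E S y| < #|nbhd E S x|.
Proof.
move=> xS yS zS xzE yzE zy xy.
have proper : nbhd E S y :\ x \proper nbhd E S x :\ y.
  apply/properP; split; last first.
    by exists z; rewrite !inE ?zy ?zS ?xzE ?(negbTE yzE) ?andbF.
  (* a neighbour w of y outside N(x) closes the alternating cycle x-z-y-w-x *)
  apply/subsetP => w /[!inE] /andP[wx /andP[wS ywE]].
  rewrite wS eq_sym edge_neq //=; apply: contraT => xwE.
  by exfalso; apply: (@alt4E x z w y) => //; rewrite 1?eq_sym 1?setUC.
have sym : (x \in nbhd E S y) = (y \in nbhd E S x) by rewrite !inE xS yS setUC.
rewrite (cardsD1 x (nbhd E S y)) (cardsD1 y (nbhd E S x)) sym ltn_add2l.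
exact: proper_card.
Qed.

Lemma deg_lt x y z : [set x; z] \in E -> [set y; z] \notin E ->
  z != y -> x != y -> deg E y < deg E x.
Proof. by move=> *; rewrite !deg_nbhd (@card_nbhd_lt _ _ _ z) ?inE. Qed.

Lemma exists_isolated_or_dominating S : S != set0 ->
  exists2 x, x \in S &
    (forall z, z \in S -> [set x; z] \notin E) \/
    (forall z, z \in S -> z != x -> [set x; z] \in E).
Proof.
case/set0Pn=> x0 x0S.
have [x xS xmax] := arg_maxnP (fun x => #|nbhd E S x|) x0S.
case: (boolP [forall z in S, (z != x) ==> ([set x; z] \in E)]).
  move/forall_inP=> dom.
  by exists x => //; right => z /dom /implyP.
case/forall_inPn=> y yS; rewrite negb_imply => /andP[yx xyE].
exists y => //; left => z zS; apply/negP => yzE.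
have zx : z != x by apply: contraNneq xyE => <-; rewrite setUC.
have /= zx_max := xmax z zS.
have := card_nbhd_lt zS xS yS _ xyE yx zx.
by rewrite setUC yzE ltnNge zx_max => /(_ isT).
Qed.

End AlternatingCycleFree.

Lemma threshold_on_set0 : threshold_on E set0.
Proof.
exists (fun=> 0), 0 => X; rewrite subset0 => /eqP->.
by rewrite big_set0; apply/independentP => a b; rewrite inE.
Qed.

Lemma threshold_on_isolated S x : x \in S ->
  (forall z, z \in S -> [set x; z] \notin E) ->
  threshold_on E (S :\ x) -> threshold_on E S.
Proof.
move=> xS iso [l [t thr]].
exists (fun y => if y == x then 0 else l y), t => X XS.
have -> : independent E X = independent E (X :\ x).
  apply/independentP/independentP => noedge a b.
    by rewrite !inE => /andP[_ aX] /andP[_ bX]; apply: noedge.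
  move=> aX bX; case: (eqVneq a x) => [-> | ax].
    exact/iso/(subsetP XS).
  case: (eqVneq b x) => [-> | bx].
    by rewrite setUC; apply/iso/(subsetP XS).
  by apply: noedge; rewrite !inE ?ax ?bx.
rewrite (big_setD1_if _ x) /= eqxx if_same add0n thr; last exact: setSD.
by congr (_ <= _); apply: eq_bigr => y /[!inE] /andP[/negbTE->].
Qed.

Lemma threshold_on_dominating S x : x \in S ->
  (forall z, z \in S -> z != x -> [set x; z] \in E) ->
  threshold_on E (S :\ x) -> threshold_on E S.
Proof.
move=> xS dom [l [t thr]]; set n := #|T|; set tx := n.+1 * t + n.
(* Scaling by n.+1 absorbs the +1 on at most n labels (scaled_leq), and the +1
   makes x together with any other vertex exceed tx. *)
exists (fun y => if y == x then tx else n.+1 * l y + 1), tx => X XS.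
rewrite (big_setD1_if _ x) eqxx.
have -> : \sum_(y in X :\ x) (if y == x then tx else n.+1 * l y + 1) =
          n.+1 * \sum_(y in X :\ x) l y + #|X :\ x|.
  rewrite big_distrr -sum1_card -big_split /=.
  by apply: eq_bigr => y /[!inE] /andP[/negbTE->].
case: ifP => xX; last first.
  have -> : X :\ x = X.
    by apply/setP => y; rewrite !inE; case: eqP => // ->; rewrite xX.
  rewrite add0n scaled_leq ?max_card // thr //; apply/subsetP => y yX.
  by rewrite !inE (subsetP XS) // andbT; apply: contraFneq xX => <-.
case: (set_0Vmem (X :\ x)) => [Xx0 | [y /[!inE] /andP[yx yX]]].
  rewrite Xx0 big_set0 cards0 muln0 !addn0 leqnn.
  have onlyx w : w \in X -> w = x.
    move=> wX; have /setP/(_ w) := Xx0.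
    by rewrite !inE wX andbT => /negbFE/eqP.
  by apply/independentP => a b /onlyx-> /onlyx->; rewrite loop_notin.
have -> : independent E X = false.
  by apply/negbTE/independentP => /(_ x y xX yX); rewrite dom ?(subsetP XS).
have : 0 < #|X :\ x| by apply/card_gt0P; exists y; rewrite !inE yx.
by move=> Xx; apply/esym/negbTE; rewrite -ltnNge; lia.
Qed.

Lemma alt4_free_threshold_on S : alt4_free E -> threshold_on E S.
Proof.
move=> alt4E; have [n ltS] := ubnP #|S|; elim: n S ltS => // n IH S ltS.
case: (eqVneq S set0) => [-> | S0]; first exact: threshold_on_set0.
have [x xS iso_dom] := exists_isolated_or_dominating alt4E S0.
have thrSx : threshold_on E (S :\ x).
  by apply: IH; rewrite (cardsD1 x) xS in ltS.
case: iso_dom => [iso | dom].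
  exact: threshold_on_isolated iso thrSx.
exact: threshold_on_dominating dom thrSx.
Qed.

Lemma alt4_free_threshold : alt4_free E -> threshold E.
Proof.
move=> /(alt4_free_threshold_on setT) [l [t thr]].
by exists l, t => X; apply: thr; apply: subsetT.
Qed.

End SimpleGraph.

Section DegreeMinimalEdge.
Variables (E F : {set {set T}}) (u v : T).
Hypotheses (simpleE : simple_graph E) (alt4E : alt4_free E).
Hypotheses (alt4EF : alt4_free (E :\: F)) (FE : F \subset E).
Hypothesis uvF : [set u; v] \in F.
Hypothesis min_u :
  forall w, (exists2 f, f \in F & w \in f) -> deg E u <= deg E w.
Hypothesis min_v : forall w, [set u; w] \in F -> deg E v <= deg E w.

Lemma no_alt4_across_minimal_edge b d : b != d ->
  [set u; b] \in E :\ [set u; v] -> [set v; d] \in E :\ [set u; v] ->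
  [set b; d] \notin E :\ [set u; v] -> False.
Proof.
move=> bd /[!inE] /andP[ub_uv ubE] /andP[vd_uv vdE] bdE'.
have uv : u != v := edge_neq simpleE (subsetP FE _ uvF).
have bv : b != v by apply: contraNneq ub_uv => ->.
have ud : u != d by apply: contraNneq vd_uv => <-; rewrite setUC.
have bdE : [set b; d] \notin E.
  apply: contra bdE' => ->; rewrite andbT.
  apply: contraTneq (set21 b d) => ->.
  by rewrite !inE negb_or eq_sym (edge_neq simpleE ubE) bv.
have [ubF | ubF] := boolP ([set u; b] \in F).
  have [db vb] : d != b /\ v != b by rewrite !(eq_sym _ b).
  by have := deg_lt simpleE alt4E vdE bdE db vb; rewrite ltnNge min_v.
have [vdF | vdF] := boolP ([set v; d] \in F).
  have dbE : [set d; b] \notin E by rewrite setUC.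
  have := deg_lt simpleE alt4E ubE dbE bd ud; rewrite ltnNge min_u //.
  by exists [set v; d]; rewrite ?set22.
apply: (@alt4EF u b v d) => //;
  by rewrite !inE ?ubF ?vdF ?ubE ?vdE ?uvF ?(negbTE bdE) ?andbF.
Qed.

End DegreeMinimalEdge.
End AlternatingCycles.

Theorem theorem4p5 (T : finType) (E F : {set {set T}}) (e : {set T}) :
  simple_graph E -> threshold E -> F \subset E -> threshold (E :\: F) ->
  degree_minimal E F e -> threshold (E :\ e).
Proof.
move=> simpleE thrE FE thrEF [eF [u [v [e_uv min_u min_v]]]]; subst e.
have alt4E := threshold_alt4_free simpleE thrE.
have simpleEF := simple_graph_sub simpleE (subsetDl E F).
have alt4EF := threshold_alt4_free simpleEF thrEF.
apply: alt4_free_threshold.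
  exact: simple_graph_sub simpleE (subsetDl E _).
exact: alt4_free_setD1 alt4E
  (no_alt4_across_minimal_edge simpleE alt4E alt4EF FE eF min_u min_v).
Qed.
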